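(* Let $-D/2\le x_C<x_B\le D/2$, let $(\bar r_1^{BC},\bar r_2^{BC})$ be the unique intersection point of the boundary curves of $\mathcal{C}_f(x_B)$ and $\mathcal{C}_f(x_C)$, and let $(\bar r_1^B,\bar r_2^B)\in\partial\mathcal{C}_f(x_B)$ and $(\bar r_1^C,\bar r_2^C)\in\partial\mathcal{C}_f(x_C)$ be the points at which the upper-right common tangent line $\ell$ of the convex hull of $\mathcal{C}_f(x_B)\cup\mathcal{C}_f(x_C)$ touches the boundaries of $\mathcal{C}_f(x_B)$ and $\mathcal{C}_f(x_C)$, respectively. Then $0\le\bar r_1^B<\bar r_1^{BC}<\bar r_1^C$ and $0\le\bar r_2^C<\bar r_2^{BC}<\bar r_2^B$.
   Context: Fix $D>0$, $H>0$, $\beta_0>0$, $\bar P>0$. Ground users GU 1, GU 2 are at horizontal positions $x_1=-D/2$, $x_2=D/2$; for a UAV at horizontal position $x$ (altitude $H$), $h_k(x)=\beta_0/((x-x_k)^2+H^2)$. For $p_1,p_2\ge0$, $\mathcal{C}_{\rm MAC}(x,p_1,p_2)$ is the set of $(r_1,r_2)$, $r_1,r_2\ge0$, with $r_1\le\log_2(1+p_1h_1(x))$, $r_2\le\log_2(1+p_2h_2(x))$, $r_1+r_2\le\log_2(1+p_1h_1(x)+p_2h_2(x))$; the fixed-location capacity region is $\mathcal{C}_f(x)=\bigcup_{p_1,p_2\ge0,\,p_1+p_2\le\bar P}\mathcal{C}_{\rm MAC}(x,p_1,p_2)$. For $m\in\{B,C\}$, the boundary curve of $\mathcal{C}_f(x_m)$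 is $r_2^m(r_1)=\max\{r_2:(r_1,r_2)\in\mathcal{C}_f(x_m)\}$ for $0\le r_1\le\log_2(1+\bar Ph_1(x_m))$; the two curves $r_2^B$ and $r_2^C$ intersect at exactly one point, denoted $(\bar r_1^{BC},\bar r_2^{BC})$. *)

From Stdlib Require Import Reals.
Open Scope R_scope.

Definition log2 (y : R) : R := ln y / ln 2.

Definition gain (beta0 H xk x : R) : R := beta0 / ((x - xk) ^ 2 + H ^ 2).
Definition h1 (D H beta0 x : R) : R := gain beta0 H (- D / 2) x.
Definition h2 (D H beta0 x : R) : R := gain beta0 H (D / 2) x.

Definition C_MAC (D H beta0 x p1 p2 r1 r2 : R) : Prop :=
  0 <= r1 /\ 0 <= r2 /\
  r1 <= log2 (1 + p1 * h1 D H beta0 x) /\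
  r2 <= log2 (1 + p2 * h2 D H beta0 x) /\
  r1 + r2 <= log2 (1 + p1 * h1 D H beta0 x + p2 * h2 D H beta0 x).

Definition C_f (D H beta0 P x r1 r2 : R) : Prop :=
  exists p1 p2, 0 <= p1 /\ 0 <= p2 /\ p1 + p2 <= P /\ C_MAC D H beta0 x p1 p2 r1 r2.

Definition boundary_pt (D H beta0 P x r1 r2 : R) : Prop :=
  0 <= r1 <= log2 (1 + P * h1 D H beta0 x) /\
  C_f D H beta0 P x r1 r2 /\
  (forall r2', C_f D H beta0 P x r1 r2' -> r2' <= r2).

From Stdlib Require Import Reals Lra Psatz.
From Coquelicot Require Import Coquelicot.
Open Scope R_scope.

(* In the SNR coordinates u = 2^r1 - 1, v = 2^r2 - 1 the region C_f(x) is
   { u, v >= 0 : u/a + v/b + u v / max(a, b) <= P } with a = h1(x), b = h2(x), so its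
   upper boundary is the graph of f(u) = (P - u/a) / (1/b + u/max(a, b)).  Moving the UAV
   from x_C to x_B lowers h1 and raises h2; the difference of the two frontiers is then, up
   to a positive factor, a quadratic that is negative at u = 0 and positive at
   u = P h1(x_B).  Hence the curves cross exactly once, transversally, with C_f(x_B) on top
   to the left of the crossing and C_f(x_C) on top to the right.  A common supporting line
   therefore touches C_f(x_B) left of the crossing and C_f(x_C) right of it; it cannot pass
   through the crossing itself, since a supporting line through a smooth boundary point is
   the tangent there and the two tangents differ. *)

Lemma ln2_pos : 0 < ln 2.
Proof. pose proof ln_lt_2; lra. Qed.

Definition snr (r : R) : R := exp (r * ln 2) - 1.

Lemma log2_snr r : log2 (1 + snr r) = r.
Proof.
  unfold log2, snr; replace (1 + (exp (r * ln 2) - 1)) with (exp (r * ln 2)) by ring.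
  rewrite ln_exp; field; pose proof ln2_pos; lra.
Qed.

Lemma snr_log2 u : -1 < u -> snr (log2 (1 + u)) = u.
Proof.
  intro hu; unfold log2, snr.
  replace (ln (1 + u) / ln 2 * ln 2) with (ln (1 + u)) by (field; pose proof ln2_pos; lra).
  rewrite exp_ln; lra.
Qed.

Lemma snr_0 : snr 0 = 0.
Proof. unfold snr; rewrite Rmult_0_l, exp_0; ring. Qed.

Lemma snr_add r1 r2 : 1 + snr (r1 + r2) = (1 + snr r1) * (1 + snr r2).
Proof. unfold snr; rewrite Rmult_plus_distr_r, exp_plus; ring. Qed.

Lemma snr_increasing r r' : r < r' -> snr r < snr r'.
Proof.
  intro h; unfold snr.
  enough (exp (r * ln 2) < exp (r' * ln 2)) by lra.
  apply exp_increasing, Rmult_lt_compat_r; [apply ln2_pos | exact h].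
Qed.

Lemma snr_le r r' : r <= r' -> snr r <= snr r'.
Proof. intros [h | <-]; [apply Rlt_le, snr_increasing |]; lra. Qed.

Lemma snr_lt_inv r r' : snr r < snr r' -> r < r'.
Proof. intro h; destruct (Rlt_or_le r r') as [|h']; auto; apply snr_le in h'; lra. Qed.

Lemma snr_ge0 r : 0 <= r -> 0 <= snr r.
Proof. intro h; rewrite <- snr_0; apply snr_le, h. Qed.

Lemma le_log2_snr r y : 0 < y -> r <= log2 y -> 1 + snr r <= y.
Proof.
  intros hy h; apply snr_le in h.
  replace y with (1 + (y - 1)) in h by ring; rewrite snr_log2 in h; lra.
Qed.

Lemma log2_le y y' : 0 < y -> y <= y' -> log2 y <= log2 y'.
Proof.
  intros hy [h | <-]; [| lra]; unfold log2, Rdiv.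
  apply Rmult_le_compat_r; [apply Rlt_le, Rinv_0_lt_compat, ln2_pos |].
  apply Rlt_le, ln_increasing; auto.
Qed.

Lemma log2_lt y y' : 0 < y -> y < y' -> log2 y < log2 y'.
Proof.
  intros hy h; unfold log2, Rdiv.
  apply Rmult_lt_compat_r; [apply Rinv_0_lt_compat, ln2_pos |].
  apply ln_increasing; auto.
Qed.

Lemma log2_mult y y' : 0 < y -> 0 < y' -> log2 (y * y') = log2 y + log2 y'.
Proof. intros; unfold log2; rewrite ln_mult; auto; unfold Rdiv; ring. Qed.

Lemma log2_1 : log2 1 = 0.
Proof. unfold log2; rewrite ln_1; unfold Rdiv; ring. Qed.

Lemma log2_1p_ge0 u : 0 <= u -> 0 <= log2 (1 + u).
Proof. intro hu; rewrite <- log2_1; apply log2_le; lra. Qed.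

Definition mac_region (a b P r1 r2 : R) : Prop :=
  exists p1 p2, 0 <= p1 /\ 0 <= p2 /\ p1 + p2 <= P /\
    0 <= r1 /\ 0 <= r2 /\ r1 <= log2 (1 + p1 * a) /\ r2 <= log2 (1 + p2 * b) /\
    r1 + r2 <= log2 (1 + p1 * a + p2 * b).

Lemma C_f_mac_region D H beta0 P x :
  C_f D H beta0 P x = mac_region (h1 D H beta0 x) (h2 D H beta0 x) P.
Proof. reflexivity. Qed.

Lemma mac_region_swap a b P r1 r2 : mac_region a b P r1 r2 -> mac_region b a P r2 r1.
Proof.
  intros (p1 & p2 & hp1 & hp2 & hp & h1 & h2 & h3 & h4 & h5).
  exists p2, p1; repeat split; try lra.
  replace (1 + p2 * b + p1 * a) with (1 + p1 * a + p2 * b) by ring; lra.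
Qed.

Lemma mac_region_r1_le a b P r1 r2 : 0 < a -> mac_region a b P r1 r2 -> r1 <= log2 (1 + P * a).
Proof.
  intros ha (p1 & p2 & hp1 & hp2 & hp & _ & _ & h & _).
  apply (Rle_trans _ _ _ h), log2_le; nra.
Qed.

Lemma mac_region_single_user1 a b P : 0 < a -> 0 <= P -> mac_region a b P (log2 (1 + P * a)) 0.
Proof.
  intros ha hP; exists P, 0; rewrite !Rmult_0_l, !Rplus_0_r.
  assert (0 <= log2 (1 + P * a)) by (apply log2_1p_ge0, Rmult_le_pos; lra).
  rewrite log2_1; repeat split; lra.
Qed.

Lemma snr_pair_power_bound a b p1 p2 u v :
  0 < a <= b -> 0 <= p1 -> 0 <= p2 -> 0 <= u -> 0 <= v -> u <= p1 * a ->
  (1 + u) * (1 + v) <= 1 + p1 * a + p2 * b ->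
  u / a + v / b + u * v / b <= p1 + p2.
Proof.
  intros [ha hab] hp1 hp2 hu hv hu1 huv.
  (* the sum-rate constraint scaled by a, plus (b - a) (p1 a - u) >= 0 *)
  assert (u * b + v * a + u * v * a <= (p1 + p2) * (a * b)).
  { assert (0 <= (b - a) * (p1 * a - u)) by (apply Rmult_le_pos; lra). nra. }
  apply (Rmult_le_reg_r (a * b)); [nra |].
  replace ((u / a + v / b + u * v / b) * (a * b)) with (u * b + v * a + u * v * a)
    by (field; lra).
  lra.
Qed.

Lemma mac_region_of_snr_ordered a b P u v :
  0 < a <= b -> 0 <= u -> 0 <= v -> u / a + v / b + u * v / b <= P ->
  mac_region a b P (log2 (1 + u)) (log2 (1 + v)).
Proof.
  intros [ha hab] hu hv hP.
  (* successive decoding with user 1 decoded last: p1 a = u, p2 b = v (1 + u) *)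
  exists (u / a), (v * (1 + u) / b).
  replace (u / a * a) with u by (field; lra).
  replace (v * (1 + u) / b * b) with (v * (1 + u)) by (field; lra).
  repeat split.
  - apply Rdiv_le_0_compat; lra.
  - apply Rdiv_le_0_compat; nra.
  - replace (u / a + v * (1 + u) / b) with (u / a + v / b + u * v / b) by (field; lra); lra.
  - apply log2_1p_ge0; lra.
  - apply log2_1p_ge0; lra.
  - lra.
  - apply log2_le; nra.
  - rewrite <- log2_mult by lra; apply Req_le; f_equal; ring.
Qed.

Lemma mac_region_iff a b P r1 r2 : 0 < a -> 0 < b ->
  mac_region a b P r1 r2 <->
  0 <= r1 /\ 0 <= r2 /\ snr r1 / a + snr r2 / b + snr r1 * snr r2 / Rmax a b <= P.
Proof.
  intros ha hb; split.
  - intros (p1 & p2 & hp1 & hp2 & hp & h1 & h2 & h3 & h4 & h5).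
    apply le_log2_snr in h3; [| nra]; apply le_log2_snr in h4; [| nra].
    apply le_log2_snr in h5; [| nra]; rewrite snr_add in h5.
    pose proof (snr_ge0 _ h1); pose proof (snr_ge0 _ h2).
    repeat split; auto.
    destruct (Rle_or_lt a b) as [hab | hba].
    + rewrite Rmax_right by lra.
      enough (snr r1 / a + snr r2 / b + snr r1 * snr r2 / b <= p1 + p2) by lra.
      apply snr_pair_power_bound; lra.
    + rewrite Rmax_left, (Rmult_comm (snr r1)) by lra.
      enough (snr r2 / b + snr r1 / a + snr r2 * snr r1 / a <= p2 + p1) by lra.
      apply snr_pair_power_bound; lra.
  - intros (h1 & h2 & h).
    pose proof (snr_ge0 _ h1); pose proof (snr_ge0 _ h2).
    rewrite <- (log2_snr r1), <- (log2_snr r2).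
    destruct (Rle_or_lt a b) as [hab | hba].
    + rewrite Rmax_right in h by lra; apply mac_region_of_snr_ordered; auto; lra.
    + rewrite Rmax_left in h by lra.
      apply mac_region_swap, mac_region_of_snr_ordered; auto; [lra |].
      rewrite (Rmult_comm (snr r2)); lra.
Qed.

Lemma Rmax_pos a b : 0 < a -> 0 < Rmax a b.
Proof. intro ha; pose proof (Rmax_l a b); lra. Qed.

Definition frontier (a b m P u : R) : R := (P - u / a) / (1 / b + u / m).

Lemma frontier_denom_pos b m u : 0 < b -> 0 < m -> 0 <= u -> 0 < 1 / b + u / m.
Proof.
  intros hb hm hu; apply Rplus_lt_le_0_compat;
    [apply Rdiv_lt_0_compat | apply Rdiv_le_0_compat]; lra.
Qed.

Lemma frontier_mul_denom a b m P u : 0 < a -> 0 < b -> 0 < m -> 0 <= u ->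
  frontier a b m P u * (1 / b + u / m) = P - u / a.
Proof.
  intros ha hb hm hu; pose proof (frontier_denom_pos b m u hb hm hu).
  unfold frontier; field; repeat split; nra.
Qed.

Lemma le_frontier a b m P u v : 0 < b -> 0 < m -> 0 <= u ->
  v <= frontier a b m P u <-> u / a + v / b + u * v / m <= P.
Proof.
  intros hb hm hu; pose proof (frontier_denom_pos b m u hb hm hu).
  unfold frontier; rewrite <- Rle_div_r by lra.
  replace (v * (1 / b + u / m)) with (v / b + u * v / m) by (field; lra).
  split; lra.
Qed.

Lemma frontier_nonneg a b m P u : 0 < a -> 0 < b -> 0 < m -> 0 <= u -> u <= P * a ->
  0 <= frontier a b m P u.
Proof.
  intros ha hb hm hu huP; apply le_frontier; auto.
  replace (u / a + 0 / b + u * 0 / m) with (u / a) by (field; lra).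
  apply Rle_div_l; lra.
Qed.

Lemma frontier_pos a b m P u : 0 < a -> 0 < b -> 0 < m -> 0 <= u -> u < P * a ->
  0 < frontier a b m P u.
Proof.
  intros ha hb hm hu huP; apply Rdiv_lt_0_compat; [| apply frontier_denom_pos; auto].
  enough (u / a < P) by lra; apply Rlt_div_l; lra.
Qed.

Lemma frontier_at_max a b m P : 0 < a -> frontier a b m P (P * a) = 0.
Proof.
  intro ha; unfold frontier; replace (P - P * a / a) with 0 by (field; lra).
  unfold Rdiv; apply Rmult_0_l.
Qed.

Lemma frontier_decreasing a b m P u u' : 0 < a -> 0 < b -> 0 < m -> 0 <= P ->
  0 <= u -> u < u' -> frontier a b m P u' < frontier a b m P u.
Proof.
  intros ha hb hm hP hu huu.
  pose proof (frontier_denom_pos b m u hb hm hu) as hd.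
  pose proof (frontier_denom_pos b m u' hb hm ltac:(lra)) as hd'.
  assert (frontier a b m P u - frontier a b m P u' =
          (u' - u) * (P / m + 1 / (a * b)) / ((1 / b + u / m) * (1 / b + u' / m)))
    by (unfold frontier; field; repeat split; nra).
  enough (0 < (u' - u) * (P / m + 1 / (a * b)) / ((1 / b + u / m) * (1 / b + u' / m)))
    by lra.
  apply Rdiv_lt_0_compat; [apply Rmult_lt_0_compat |]; [lra | | nra].
  apply Rplus_le_lt_0_compat; [apply Rdiv_le_0_compat | apply Rdiv_lt_0_compat]; nra.
Qed.

Lemma mac_region_frontier_iff a b P r1 r2 : 0 < a -> 0 < b ->
  mac_region a b P r1 r2 <->
  0 <= r1 /\ 0 <= r2 /\ snr r2 <= frontier a b (Rmax a b) P (snr r1).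
Proof.
  intros ha hb.
  pose proof (Rmax_pos a b ha).
  rewrite mac_region_iff by auto.
  split; intros (h1 & h2 & h); repeat split; auto; apply le_frontier; auto using snr_ge0.
Qed.

Lemma mac_region_frontier_pt a b P r1 : 0 < a -> 0 < b -> 0 <= r1 ->
  0 <= frontier a b (Rmax a b) P (snr r1) ->
  mac_region a b P r1 (log2 (1 + frontier a b (Rmax a b) P (snr r1))).
Proof.
  intros ha hb h1 hf.
  assert (0 <= log2 (1 + frontier a b (Rmax a b) P (snr r1))) by (apply log2_1p_ge0; lra).
  apply mac_region_frontier_iff; auto; rewrite snr_log2 by lra.
  repeat split; auto; apply Rle_refl.
Qed.

Lemma mac_region_snr1_le a b P r1 r2 : 0 < a -> mac_region a b P r1 r2 -> snr r1 <= P * a.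
Proof.
  intros ha hr; pose proof hr as (p1 & p2 & hp1 & hp2 & hp & _).
  apply mac_region_r1_le, snr_le in hr; auto; rewrite snr_log2 in hr; nra.
Qed.

Lemma frontier_of_max a b P r1 r2 : 0 < a -> 0 < b ->
  mac_region a b P r1 r2 -> (forall r2', mac_region a b P r1 r2' -> r2' <= r2) ->
  snr r2 = frontier a b (Rmax a b) P (snr r1).
Proof.
  intros ha hb hr hmax; pose proof hr as (h1 & h2 & h)%mac_region_frontier_iff; auto.
  pose proof (snr_ge0 _ h2).
  pose proof (hmax _ (mac_region_frontier_pt a b P r1 ha hb h1 ltac:(lra))) as hf.
  apply snr_le in hf; rewrite snr_log2 in hf; lra.
Qed.

Lemma quadratic_sign_change k0 k1 k2 hi u0 :
  k0 < 0 -> 0 < k0 + k1 * hi + k2 * hi ^ 2 -> 0 <= u0 <= hi ->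
  k0 + k1 * u0 + k2 * u0 ^ 2 = 0 ->
  0 < u0 < hi /\
  (forall u, 0 <= u < u0 -> k0 + k1 * u + k2 * u ^ 2 < 0) /\
  (forall u, u0 < u <= hi -> 0 < k0 + k1 * u + k2 * u ^ 2) /\
  0 < k1 + 2 * k2 * u0.
Proof.
  intros h0 hhi [hu0 hu0hi] hroot.
  set (L u := k1 + k2 * (u + u0)).
  assert (hfac : forall u, k0 + k1 * u + k2 * u ^ 2 = (u - u0) * L u).
  { intro u; unfold L; replace k0 with (- k1 * u0 - k2 * u0 ^ 2) by lra; ring. }
  assert (hL0 : 0 < u0 /\ 0 < L 0).
  { pose proof (hfac 0); destruct (Rle_lt_dec (L 0) 0); nra. }
  assert (hLhi : u0 < hi /\ 0 < L hi).
  { pose proof (hfac hi); destruct (Rle_lt_dec (L hi) 0); nra. }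
  assert (hL : forall u, 0 <= u <= hi -> 0 < L u).
  { intros u [[hu | <-] hu']; [| lra].
    assert (L u * hi = (hi - u) * L 0 + u * L hi) by (unfold L; ring).
    assert (0 <= (hi - u) * L 0) by (apply Rmult_le_pos; lra).
    assert (0 < u * L hi) by (apply Rmult_lt_0_compat; lra).
    nra. }
  repeat split; try lra.
  - intros u hu; rewrite hfac; pose proof (hL u ltac:(lra)); nra.
  - intros u hu; rewrite hfac; pose proof (hL u ltac:(lra)); nra.
  - replace (k1 + 2 * k2 * u0) with (L u0) by (unfold L; ring); apply hL; lra.
Qed.

Definition frontier_slope (a b m P u : R) : R :=
  - (1 / a + frontier a b m P u / m) / (1 / b + u / m).

Lemma is_derive_frontier a b m P u : 0 < a -> 0 < b -> 0 < m -> 0 <= u ->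
  is_derive (frontier a b m P) u (frontier_slope a b m P u).
Proof.
  intros ha hb hm hu; pose proof (frontier_denom_pos b m u hb hm hu).
  unfold frontier_slope, frontier; auto_derive; [lra |].
  field; repeat split; nra.
Qed.

Section FrontierCrossing.

Variables aB bB mB aC bC mC P : R.
Hypotheses (haB : 0 < aB) (hbB : 0 < bB) (hmB : 0 < mB)
  (haC : 0 < aC) (hbC : 0 < bC) (hmC : 0 < mC) (hP : 0 < P)
  (haBC : aB < aC) (hbCB : bC < bB).

Let k0 := P * (1 / bB - 1 / bC).
Let k1 := P / mB - P / mC + 1 / (aB * bC) - 1 / (aC * bB).
Let k2 := 1 / (aB * mC) - 1 / (aC * mB).

Lemma frontier_gap_quadratic u : 0 <= u ->
  (frontier aC bC mC P u - frontier aB bB mB P u) * ((1 / bB + u / mB) * (1 / bC + u / mC)) =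
  k0 + k1 * u + k2 * u ^ 2.
Proof. intro hu; unfold frontier, k0, k1, k2; field; repeat split; nra. Qed.

Lemma frontier_slope_gap u : 0 <= u -> frontier aB bB mB P u = frontier aC bC mC P u ->
  (frontier_slope aC bC mC P u - frontier_slope aB bB mB P u) *
    ((1 / bB + u / mB) * (1 / bC + u / mC)) =
  k1 + 2 * k2 * u.
Proof.
  intros hu heq.
  pose proof (frontier_denom_pos bB mB u hbB hmB hu).
  pose proof (frontier_denom_pos bC mC u hbC hmC hu).
  pose proof (frontier_mul_denom aB bB mB P u haB hbB hmB hu) as hvB.
  pose proof (frontier_mul_denom aC bC mC P u haC hbC hmC hu) as hvC.
  rewrite <- heq in hvC; set (v := frontier aB bB mB P u) in *.
  unfold frontier_slope; rewrite <- heq; fold v.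
  replace ((- (1 / aC + v / mC) / (1 / bC + u / mC) - - (1 / aB + v / mB) / (1 / bB + u / mB)) *
             ((1 / bB + u / mB) * (1 / bC + u / mC)))
    with ((1 / bC + u / mC) / aB - (1 / bB + u / mB) / aC +
          v * (1 / bC + u / mC) / mB - v * (1 / bB + u / mB) / mC)
    by (field; repeat split; nra).
  rewrite hvB, hvC; unfold k1, k2; field; repeat split; nra.
Qed.

Lemma frontiers_cross_once u0 : 0 <= u0 <= P * aB ->
  frontier aB bB mB P u0 = frontier aC bC mC P u0 ->
  0 < u0 < P * aB /\
  (forall u, 0 <= u < u0 -> frontier aC bC mC P u < frontier aB bB mB P u) /\
  (forall u, u0 < u <= P * aB -> frontier aB bB mB P u < frontier aC bC mC P u) /\
  frontier_slope aB bB mB P u0 < frontier_slope aC bC mC P u0.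
Proof.
  intros hu0 heq.
  assert (hd : forall u, 0 <= u -> 0 < (1 / bB + u / mB) * (1 / bC + u / mC)).
  { intros u hu; apply Rmult_lt_0_compat; apply frontier_denom_pos; auto. }
  assert (hk0 : k0 < 0).
  { unfold k0; enough (1 / bB < 1 / bC) by nra.
    unfold Rdiv; rewrite !Rmult_1_l; apply Rinv_lt_contravar; nra. }
  (* at u = P aB the frontier of B vanishes while that of C does not *)
  assert (hkhi : 0 < k0 + k1 * (P * aB) + k2 * (P * aB) ^ 2).
  { rewrite <- frontier_gap_quadratic by nra; rewrite frontier_at_max by lra.
    pose proof (frontier_pos aC bC mC P (P * aB) haC hbC hmC ltac:(nra) ltac:(nra)).
    pose proof (hd (P * aB) ltac:(nra)); nra. }
  assert (hroot : k0 + k1 * u0 + k2 * u0 ^ 2 = 0).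
  { rewrite <- frontier_gap_quadratic, heq by lra; ring. }
  destruct (quadratic_sign_change k0 k1 k2 (P * aB) u0 hk0 hkhi hu0 hroot)
    as (hu0' & hleft & hright & hslope).
  repeat split; try lra.
  - intros u hu; specialize (hleft u hu); rewrite <- frontier_gap_quadratic in hleft by lra.
    pose proof (hd u ltac:(lra)); nra.
  - intros u hu; specialize (hright u hu); rewrite <- frontier_gap_quadratic in hright by lra.
    pose proof (hd u ltac:(lra)); nra.
  - rewrite <- frontier_slope_gap in hslope by lra; pose proof (hd u0 ltac:(lra)); nra.
Qed.

End FrontierCrossing.

Lemma is_derive_interior_max (f : R -> R) lo hi x l : lo < x < hi ->
  (forall y, lo < y < hi -> f y <= f x) -> is_derive f x l -> l = 0.
Proof.
  intros [hlo hhi] hmax hd; apply is_derive_Reals in hd.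
  exact (deriv_maximum f lo hi x (exist _ l hd) hlo hhi (fun y h h' => hmax y (conj h h'))).
Qed.

Lemma frontier_support_slope a b m P w1 w2 c u0 : 0 < a -> 0 < b -> 0 < m -> 0 < u0 < P * a ->
  (forall u, 0 < u < P * a -> w1 * log2 (1 + u) + w2 * log2 (1 + frontier a b m P u) <= c) ->
  w1 * log2 (1 + u0) + w2 * log2 (1 + frontier a b m P u0) = c ->
  w1 * (1 + frontier a b m P u0) + w2 * (1 + u0) * frontier_slope a b m P u0 = 0.
Proof.
  intros ha hb hm hu0 hsupp hon.
  pose proof (frontier_nonneg a b m P u0 ha hb hm ltac:(lra) ltac:(lra)) as hv.
  pose proof (is_derive_frontier a b m P u0 ha hb hm ltac:(lra)) as hd.
  set (F u := w1 * log2 (1 + u) + w2 * log2 (1 + frontier a b m P u)).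
  assert (hF : is_derive F u0 ((w1 / (1 + u0) + w2 * frontier_slope a b m P u0 /
                                 (1 + frontier a b m P u0)) / ln 2)).
  { unfold F, log2; auto_derive.
    - repeat split; [lra | exists (frontier_slope a b m P u0); exact hd | lra].
    - rewrite (is_derive_unique (fun x : R => frontier a b m P x) _ _ hd).
      field; pose proof ln2_pos; repeat split; lra. }
  apply (is_derive_interior_max F 0 (P * a)) in hF; [| lra |].
  - transitivity ((w1 / (1 + u0) + w2 * frontier_slope a b m P u0 / (1 + frontier a b m P u0))
                  / ln 2 * (ln 2 * (1 + u0) * (1 + frontier a b m P u0))).
    + field; pose proof ln2_pos; repeat split; lra.
    + rewrite hF; ring.
  - intros u hu; unfold F; rewrite hon; apply hsupp, hu.
Qed.

Lemma mac_region_support_slope a b P w1 w2 c r1 r2 : 0 < a -> 0 < b ->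
  (forall s1 s2, mac_region a b P s1 s2 -> w1 * s1 + w2 * s2 <= c) ->
  mac_region a b P r1 r2 -> (forall r2', mac_region a b P r1 r2' -> r2' <= r2) ->
  w1 * r1 + w2 * r2 = c -> 0 < snr r1 < P * a ->
  w1 * (1 + snr r2) + w2 * (1 + snr r1) * frontier_slope a b (Rmax a b) P (snr r1) = 0.
Proof.
  intros ha hb hsupp hr hmax hon hu.
  pose proof (Rmax_pos a b ha).
  rewrite (frontier_of_max a b P r1 r2 ha hb hr hmax).
  apply frontier_support_slope with (c := c); auto.
  - intros u hu'; rewrite <- (snr_log2 u) at 2 by lra.
    apply hsupp, mac_region_frontier_pt; auto.
    + apply log2_1p_ge0; lra.
    + rewrite snr_log2 by lra; apply frontier_nonneg; lra.
  - rewrite <- (frontier_of_max a b P r1 r2 ha hb hr hmax), !log2_snr; exact hon.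
Qed.

Lemma support_strict_of_frontier_lt aX bX aY bY P w1 w2 c r1 r2 :
  0 < aX -> 0 < bX -> 0 < aY -> 0 < bY -> 0 < w2 ->
  (forall s1 s2, mac_region aY bY P s1 s2 -> w1 * s1 + w2 * s2 <= c) ->
  mac_region aX bX P r1 r2 ->
  frontier aX bX (Rmax aX bX) P (snr r1) < frontier aY bY (Rmax aY bY) P (snr r1) ->
  w1 * r1 + w2 * r2 < c.
Proof.
  intros haX hbX haY hbY hw2 hsupp hr hlt.
  apply mac_region_frontier_iff in hr as (h1 & h2 & h); auto.
  pose proof (snr_ge0 _ h2).
  pose proof (hsupp _ _ (mac_region_frontier_pt aY bY P r1 haY hbY h1 ltac:(lra))).
  assert (r2 < log2 (1 + frontier aY bY (Rmax aY bY) P (snr r1)))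
    by (apply snr_lt_inv; rewrite snr_log2; lra).
  nra.
Qed.

Section CommonTangent.

Variables aB bB aC bC P : R.
Hypotheses (haB : 0 < aB) (hbB : 0 < bB) (haC : 0 < aC) (hbC : 0 < bC) (hP : 0 < P)
  (haBC : aB < aC) (hbCB : bC < bB).

Variables w1 w2 c : R.
Hypotheses (hw1 : 0 <= w1) (hw2 : 0 <= w2) (hw : 0 < w1 + w2).
Hypothesis hsuppB : forall r1 r2, mac_region aB bB P r1 r2 -> w1 * r1 + w2 * r2 <= c.
Hypothesis hsuppC : forall r1 r2, mac_region aC bC P r1 r2 -> w1 * r1 + w2 * r2 <= c.

Variables r1B r2B r1C r2C : R.
Hypotheses (hB : mac_region aB bB P r1B r2B) (hBl : w1 * r1B + w2 * r2B = c)
  (hC : mac_region aC bC P r1C r2C) (hCl : w1 * r1C + w2 * r2C = c).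

Lemma common_support_w2_pos : 0 < w2.
Proof.
  destruct hw2 as [| <-]; [auto | exfalso].
  pose proof (hsuppC _ _ (mac_region_single_user1 aC bC P haC ltac:(lra))).
  pose proof (mac_region_r1_le _ _ _ _ _ haB hB).
  assert (log2 (1 + P * aB) < log2 (1 + P * aC)) by (apply log2_lt; nra).
  nra.
Qed.

Variables r1BC r2BC : R.
Hypotheses (hBC_B : mac_region aB bB P r1BC r2BC) (hBC_C : mac_region aC bC P r1BC r2BC)
  (hmaxB : forall r2, mac_region aB bB P r1BC r2 -> r2 <= r2BC)
  (hmaxC : forall r2, mac_region aC bC P r1BC r2 -> r2 <= r2BC).

Lemma frontiers_cross_at_crossing :
  0 < snr r1BC < P * aB /\
  (forall u, 0 <= u < snr r1BC ->
     frontier aC bC (Rmax aC bC) P u < frontier aB bB (Rmax aB bB) P u) /\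
  (forall u, snr r1BC < u <= P * aB ->
     frontier aB bB (Rmax aB bB) P u < frontier aC bC (Rmax aC bC) P u) /\
  frontier_slope aB bB (Rmax aB bB) P (snr r1BC) <
    frontier_slope aC bC (Rmax aC bC) P (snr r1BC).
Proof.
  pose proof hBC_B as (h1 & _)%mac_region_frontier_iff; auto.
  apply frontiers_cross_once; auto using Rmax_pos.
  - split; [apply snr_ge0 | apply (mac_region_snr1_le _ bB _ _ r2BC)]; auto.
  - rewrite <- (frontier_of_max aB bB P r1BC r2BC), <- (frontier_of_max aC bC P r1BC r2BC);
      auto.
Qed.

Lemma crossing_below_common_support : w1 * r1BC + w2 * r2BC < c.
Proof.
  destruct (Rle_lt_or_eq_dec _ _ (hsuppB _ _ hBC_B)) as [| hon]; [auto | exfalso].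
  destruct frontiers_cross_at_crossing as (hu0 & _ & _ & hslope).
  (* the line would be tangent to both frontiers at the crossing, whose slopes differ *)
  pose proof (mac_region_support_slope aB bB P w1 w2 c r1BC r2BC haB hbB hsuppB hBC_B hmaxB
                hon hu0).
  pose proof (mac_region_support_slope aC bC P w1 w2 c r1BC r2BC haC hbC hsuppC hBC_C hmaxC
                hon ltac:(nra)).
  assert (hpos : 0 < w2 * (1 + snr r1BC)) by (pose proof common_support_w2_pos; nra).
  assert (0 < w2 * (1 + snr r1BC) *
              (frontier_slope aC bC (Rmax aC bC) P (snr r1BC) -
               frontier_slope aB bB (Rmax aB bB) P (snr r1BC)))
    by (apply Rmult_lt_0_compat; lra).
  nra.
Qed.

Lemma tangent_point_B_before_crossing : r1B < r1BC.
Proof.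
  pose proof common_support_w2_pos as hw2p; pose proof crossing_below_common_support.
  destruct (Rtotal_order r1B r1BC) as [| [<- | hgt]]; [auto | exfalso | exfalso].
  - pose proof (hmaxB _ hB); nra.
  - destruct frontiers_cross_at_crossing as (_ & _ & hright & _).
    apply snr_increasing in hgt.
    pose proof (support_strict_of_frontier_lt aB bB aC bC P w1 w2 c r1B r2B haB hbB haC hbC
                  hw2p hsuppC hB (hright _ (conj hgt (mac_region_snr1_le _ _ _ _ _ haB hB)))).
    lra.
Qed.

Lemma tangent_point_C_after_crossing : r1BC < r1C.
Proof.
  pose proof common_support_w2_pos as hw2p; pose proof crossing_below_common_support.
  destruct (Rtotal_order r1BC r1C) as [| [-> | hgt]]; [auto | exfalso | exfalso].
  - pose proof (hmaxC _ hC); nra.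
  - destruct frontiers_cross_at_crossing as (_ & hleft & _ & _).
    pose proof hC as (h1 & _)%mac_region_frontier_iff; auto.
    apply snr_increasing in hgt.
    pose proof (support_strict_of_frontier_lt aC bC aB bB P w1 w2 c r1C r2C haC hbC haB hbB
                  hw2p hsuppB hC (hleft _ (conj (snr_ge0 _ h1) hgt))).
    lra.
Qed.

Lemma tangent_point_C_below_crossing : r2C < r2BC.
Proof.
  apply snr_lt_inv.
  pose proof hC as (_ & _ & h)%mac_region_frontier_iff; auto.
  pose proof hBC_C as (h1 & _)%mac_region_frontier_iff; auto.
  rewrite (frontier_of_max aC bC P r1BC r2BC haC hbC hBC_C hmaxC).
  eapply Rle_lt_trans; [exact h |].
  apply frontier_decreasing; auto using Rmax_pos, snr_ge0, snr_increasing,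
    tangent_point_C_after_crossing; lra.
Qed.

Theorem common_tangent_points_straddle_crossing :
  (0 <= r1B /\ r1B < r1BC /\ r1BC < r1C) /\ (0 <= r2C /\ r2C < r2BC /\ r2BC < r2B).
Proof.
  pose proof hB as (h1B & _)%mac_region_frontier_iff; auto.
  pose proof hC as (_ & h2C & _)%mac_region_frontier_iff; auto.
  pose proof tangent_point_B_before_crossing; pose proof tangent_point_C_after_crossing.
  pose proof tangent_point_C_below_crossing; pose proof crossing_below_common_support.
  pose proof common_support_w2_pos.
  repeat split; auto; nra.
Qed.

End CommonTangent.

Lemma gain_pos beta0 H xk x : 0 < beta0 -> 0 < H -> 0 < gain beta0 H xk x.
Proof.
  intros hb hH; unfold gain; apply Rdiv_lt_0_compat; auto.
  pose proof (pow2_ge_0 (x - xk)); pose proof (pow_lt H 2 hH); lra.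
Qed.

Lemma gain_lt beta0 H xk x x' : 0 < beta0 -> 0 < H -> (x - xk) ^ 2 < (x' - xk) ^ 2 ->
  gain beta0 H xk x' < gain beta0 H xk x.
Proof.
  intros hb hH hd; unfold gain, Rdiv; apply Rmult_lt_compat_l; auto.
  pose proof (pow2_ge_0 (x - xk)); pose proof (pow_lt H 2 hH).
  apply Rinv_lt_contravar; [apply Rmult_lt_0_compat |]; lra.
Qed.

Lemma h1_lt D H beta0 x x' : 0 < beta0 -> 0 < H -> - D / 2 <= x -> x < x' ->
  h1 D H beta0 x' < h1 D H beta0 x.
Proof. intros; apply gain_lt; auto; nra. Qed.

Lemma h2_lt D H beta0 x x' : 0 < beta0 -> 0 < H -> x < x' -> x' <= D / 2 ->
  h2 D H beta0 x < h2 D H beta0 x'.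
Proof. intros; apply gain_lt; auto; nra. Qed.

Theorem lemma7 (D H beta0 P xB xC : R)
  (hD : 0 < D) (hH : 0 < H) (hbeta0 : 0 < beta0) (hP : 0 < P)
  (hxC : - D / 2 <= xC) (hCB : xC < xB) (hxB : xB <= D / 2)
  (* the unique intersection point of the boundary curves *)
  (r1BC r2BC : R)
  (hBC_B : boundary_pt D H beta0 P xB r1BC r2BC)
  (hBC_C : boundary_pt D H beta0 P xC r1BC r2BC)
  (hBC_uniq : forall s1 s2, boundary_pt D H beta0 P xB s1 s2 ->
                boundary_pt D H beta0 P xC s1 s2 -> s1 = r1BC)
  (* the upper-right common tangent line l : w1 r1 + w2 r2 = c *)
  (w1 w2 c : R) (hw1 : 0 <= w1) (hw2 : 0 <= w2) (hw : 0 < w1 + w2)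
  (hsuppB : forall r1 r2, C_f D H beta0 P xB r1 r2 -> w1 * r1 + w2 * r2 <= c)
  (hsuppC : forall r1 r2, C_f D H beta0 P xC r1 r2 -> w1 * r1 + w2 * r2 <= c)
  (* the touching points *)
  (r1B r2B r1C r2C : R)
  (hB : C_f D H beta0 P xB r1B r2B) (hBl : w1 * r1B + w2 * r2B = c)
  (hC : C_f D H beta0 P xC r1C r2C) (hCl : w1 * r1C + w2 * r2C = c) :
  (0 <= r1B /\ r1B < r1BC /\ r1BC < r1C) /\
  (0 <= r2C /\ r2C < r2BC /\ r2BC < r2B).
Proof.
  clear hBC_uniq.
  destruct hBC_B as (_ & hBC_B & hmaxB), hBC_C as (_ & hBC_C & hmaxC).
  rewrite !C_f_mac_region in *.
  apply (common_tangent_points_straddle_crossing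
           (h1 D H beta0 xB) (h2 D H beta0 xB) (h1 D H beta0 xC) (h2 D H beta0 xC) P)
    with (w1 := w1) (w2 := w2) (c := c); try apply gain_pos; auto using h1_lt, h2_lt.
Qed.
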